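(* The forgetful functor $V\colon \mathbf{Contr}\to\mathbf{Coll}_n$, which sends a collection equipped with a contraction to its underlying collection, is monadic.
   Context: Fix $n\in\mathbb{N}$. An $n$-globular set $X$ consists of sets $X_0,\dots,X_n$ and functions $s,t\colon X_m\to X_{m-1}$ ($1\le m\le n$) with $s\circ s=s\circ t$ and $t\circ s=t\circ t$; a map of $n$-globular sets is a family of functions commuting with $s$ and $t$. $\mathbf{GSet}_n$ is the resulting category (a presheaf category). Two $m$-cells are parallel if they have the same source and the same target (all $0$-cells are parallel). $T$ denotes the free strict $n$-category monad on $\mathbf{GSet}_n$, with unit $\eta^T$ and multiplication $\mu^T$. $1$ denotes the terminal $n$-globular set and $!$ any map to $1$; $T1$ is the free strict $n$-category on $1$ (its $m$-cells are the $m$-dimensional globular pasting diagrams); $\mathrm{id}_\alpha$ denotes the identity cell on a cell $\alpha$ of a strict $n$-category. An $n$-globular collection is a map $k\colon K\to T1$ in $\mathbf{GSet}_n$; a map of collections is a map over $T1$; $\mathbf{Coll}_n=\mathbf{GSet}_n/T1$. Contractions: for a collection $k\colon K\to T1$ and $x\in(T1)_m$ put $K(x)=\{a\in K_m: k(a)=x\}$. For $1\le m\le n$ and $\pi\in(T1)_m$ let $C_K(\pi)=K(s\pi)\times K(t\pi)$ if $m=1$, and $C_K(\pi)=\{(a,b)\in K(s\pi)\times K(t\pi): s(a)=s(b),\ t(a)=t(b)\}$ if $m>1$. A contraction $\gamma$ on $K$ consists of, for each $1\le m\le n$ and each $\alpha\in(T1)_{m-1}$, a function $\gamma_{\mathrm{id}_\alpha}\colon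 C_K(\mathrm{id}_\alpha)\to K(\mathrm{id}_\alpha)$ with $s\gamma_{\mathrm{id}_\alpha}(a,b)=a$ and $t\gamma_{\mathrm{id}_\alpha}(a,b)=b$, such that moreover (tameness) any two parallel $n$-cells $a,b$ of $K$ with $k(a)=k(b)$ are equal. $\mathbf{Contr}$ is the category whose objects are collections equipped with a contraction and whose morphisms $u\colon (K,\gamma)\to(K',\gamma')$ are maps of collections with $u(\gamma_{\mathrm{id}_\alpha}(a,b))=\gamma'_{\mathrm{id}_\alpha}(u(a),u(b))$ for all $\alpha$ and all $(a,b)\in C_K(\mathrm{id}_\alpha)$. *)

From Stdlib Require Import List FunctionalExtensionality ProofIrrelevance.
Set Implicit Arguments.
Unset Strict Implicit.

Record Category := {
  Ob :> Type;
  Hom : Ob -> Ob -> Type;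
  idm : forall a, Hom a a;
  comp : forall a b c, Hom b c -> Hom a b -> Hom a c;
  comp_id_l : forall a b (f : Hom a b), comp (idm b) f = f;
  comp_id_r : forall a b (f : Hom a b), comp f (idm a) = f;
  comp_assoc : forall a b c d (f : Hom a b) (g : Hom b c) (h : Hom c d),
      comp h (comp g f) = comp (comp h g) f }.
Arguments Hom : clear implicits.
Arguments idm {C} a : rename.
Arguments comp {C a b c} g f : rename.

Record Functor (C D : Category) := {
  fobj :> C -> D;
  fmap : forall a b : C, Hom C a b -> Hom D (fobj a) (fobj b);
  fmap_id : forall a, fmap (idm a) = idm (fobj a);
  fmap_comp : forall (a b c : C) (f : Hom C a b) (g : Hom C b c),
      fmap (comp g f) = comp (fmap g) (fmap f) }.
Arguments fmap {C D} F {a b} f : rename.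

(* U : D -> C is monadic: it has a left adjoint F (unit eta, counit eps),
   and the Eilenberg-Moore comparison functor D -> C^{UF}
   (A |-> (U A, U eps_A)) is an equivalence of categories, written out as
   "fully faithful and essentially surjective". *)
Definition monadic (D C : Category) (U : Functor D C) : Prop :=
  exists (F : Functor C D)
         (eta : forall X : C, Hom C X (U (F X)))
         (eps : forall A : D, Hom D (F (U A)) A),
    (forall X Y (f : Hom C X Y),
        comp (fmap U (fmap F f)) (eta X) = comp (eta Y) f) /\
    (forall A B (g : Hom D A B),
        comp g (eps A) = comp (eps B) (fmap F (fmap U g))) /\
    (forall X, comp (eps (F X)) (fmap F (eta X)) = idm (F X)) /\
    (forall A, comp (fmap U (eps A)) (eta (U A)) = idm (U A)) /\
    (forall A B (f : Hom C (U A) (U B)),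
        comp f (fmap U (eps A)) = comp (fmap U (eps B)) (fmap U (fmap F f)) ->
        exists! g : Hom D A B, fmap U g = f) /\
    (forall (X : C) (h : Hom C (U (F X)) X),
        comp h (eta X) = idm X ->
        comp h (fmap U (fmap F h)) = comp h (fmap U (eps (F X))) ->
        exists (A : D) (phi : Hom C (U A) X) (psi : Hom C X (U A)),
          comp phi psi = idm X /\ comp psi phi = idm (U A) /\
          comp phi (fmap U (eps A)) = comp h (fmap U (fmap F phi))).

(* m-dimensional globular pasting diagrams: a 0-pd is unique, an
   (m+1)-pd is a finite list of m-pds (Batanin trees). *)
Fixpoint pd (m : nat) : Type :=
  match m with 0 => unit | S m' => list (pd m') end.

(* source = target of an (m+1)-pd *)
Fixpoint pd_bd (m : nat) : pd (S m) -> pd m :=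
  match m return pd (S m) -> pd m with
  | 0 => fun _ => tt
  | S m' => fun l => map (@pd_bd m') l
  end.

Fixpoint pd_id (m : nat) : pd m -> pd (S m) :=
  match m return pd m -> pd (S m) with
  | 0 => fun _ => nil
  | S m' => fun l => map (@pd_id m') l
  end.

Record gset (n : nat) := GSet {
  cell : nat -> Type;
  src : forall m, cell (S m) -> cell m;
  tgt : forall m, cell (S m) -> cell m;
  glob_ss : forall m (x : cell (S (S m))), src (src x) = src (tgt x);
  glob_ts : forall m (x : cell (S (S m))), tgt (src x) = tgt (tgt x);
  trunc : forall m, n < m -> cell m -> False }.
Arguments src {n} g {m} _.
Arguments tgt {n} g {m} _.

Definition par n (X : gset n) (m : nat) : cell X m -> cell X m -> Prop :=
  match m return cell X m -> cell X m -> Prop with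
  | 0 => fun _ _ => True
  | S m' => fun a b => src X a = src X b /\ tgt X a = tgt X b
  end.
Arguments par {n} X m.

Record coll (n : nat) := Coll {
  carrier : gset n;
  arity : forall m, cell carrier m -> pd m;
  arity_src : forall m (x : cell carrier (S m)),
      arity (src carrier x) = pd_bd (arity x);
  arity_tgt : forall m (x : cell carrier (S m)),
      arity (tgt carrier x) = pd_bd (arity x) }.
Arguments arity {n} c {m} _.

Record cmap n (K K' : coll n) := CMap {
  cm : forall m, cell (carrier K) m -> cell (carrier K') m;
  cm_src : forall m (x : cell (carrier K) (S m)),
      cm (src _ x) = src _ (cm x);
  cm_tgt : forall m (x : cell (carrier K) (S m)),
      cm (tgt _ x) = tgt _ (cm x);
  cm_ar : forall m (x : cell (carrier K) m), arity K' (cm x) = arity K x }.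
Arguments cm {n K K'} c {m} _.

Lemma cmap_eq n (K K' : coll n) (f g : cmap K K') :
  @cm n K K' f = @cm n K K' g -> f = g.
Proof.
  destruct f as [f1 f2 f3 f4], g as [g1 g2 g3 g4]; simpl; intros E.
  subst. f_equal; apply proof_irrelevance.
Qed.

Definition cmap_id n (K : coll n) : cmap K K.
Proof.
  refine (@CMap n K K (fun m x => x) _ _ _); reflexivity.
Defined.

Definition cmap_comp n (K1 K2 K3 : coll n) (g : cmap K2 K3) (f : cmap K1 K2)
  : cmap K1 K3.
Proof.
  refine (@CMap n K1 K3 (fun m x => cm g (cm f x)) _ _ _); intros.
  - rewrite cm_src, cm_src; reflexivity.
  - rewrite cm_tgt, cm_tgt; reflexivity.
  - rewrite cm_ar, cm_ar; reflexivity.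
Defined.

Definition Coll_cat (n : nat) : Category.
Proof.
  refine (@Build_Category (coll n) (@cmap n) (@cmap_id n) (@cmap_comp n)
            _ _ _); intros; apply cmap_eq; reflexivity.
Defined.

(* For m+1 <= n and alpha in (T1)_m, gam m alpha is defined on
   C_K(id_alpha) = {(a,b) in K(alpha) x K(alpha) | a, b parallel}
   (for m = 0 all 0-cells are parallel, so this is K(alpha) x K(alpha)). *)
Record contraction n (K : coll n) := Contraction {
  gam : forall m (al : pd m), S m <= n ->
        forall a b : cell (carrier K) m,
        arity K a = al -> arity K b = al -> par (carrier K) m a b ->
        cell (carrier K) (S m);
  gam_ar : forall m al h a b ha hb hab,
      arity K (@gam m al h a b ha hb hab) = pd_id al;
  gam_src : forall m al h a b ha hb hab,
      src (carrier K) (@gam m al h a b ha hb hab) = a;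
  gam_tgt : forall m al h a b ha hb hab,
      tgt (carrier K) (@gam m al h a b ha hb hab) = b;
  tame : forall a b : cell (carrier K) n,
      par (carrier K) n a b -> arity K a = arity K b -> a = b }.

Record contr (n : nat) := Contr {
  ccoll : coll n;
  ccon : contraction ccoll }.

Record contr_map n (A B : contr n) := ContrMap {
  ucm : cmap (ccoll A) (ccoll B);
  ucm_gam : forall m al h a b ha hb hab ha' hb' hab',
      cm ucm (@gam _ _ (ccon A) m al h a b ha hb hab)
      = @gam _ _ (ccon B) m al h (cm ucm a) (cm ucm b) ha' hb' hab' }.

Lemma contr_map_eq n (A B : contr n) (f g : contr_map A B) :
  ucm f = ucm g -> f = g.
Proof.
  destruct f as [f1 f2], g as [g1 g2]; simpl; intros E; subst.
  f_equal; apply proof_irrelevance.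
Qed.

Definition contr_map_id n (A : contr n) : contr_map A A.
Proof.
  refine (@ContrMap n A A (cmap_id _) _); intros; simpl.
  f_equal; apply proof_irrelevance.
Defined.

Definition contr_map_comp n (A B C : contr n) (g : contr_map B C)
  (f : contr_map A B) : contr_map A C.
Proof.
  refine (@ContrMap n A C (cmap_comp (ucm g) (ucm f)) _); intros; simpl.
  assert (ha1 : arity (ccoll B) (cm (ucm f) a) = al)
    by (rewrite cm_ar; exact ha).
  assert (hb1 : arity (ccoll B) (cm (ucm f) b) = al)
    by (rewrite cm_ar; exact hb).
  assert (hab1 : par (carrier (ccoll B)) m (cm (ucm f) a) (cm (ucm f) b)).
  { destruct m; simpl in *; [exact I|].
    destruct hab as [E1 E2]. rewrite <- !cm_src, <- !cm_tgt, E1, E2.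
    split; reflexivity. }
  rewrite (@ucm_gam _ _ _ f m al h a b ha hb hab ha1 hb1 hab1).
  apply ucm_gam.
Defined.

Definition Contr_cat (n : nat) : Category.
Proof.
  refine (@Build_Category (contr n) (@contr_map n) (@contr_map_id n)
            (@contr_map_comp n) _ _ _); intros; apply contr_map_eq;
    apply cmap_eq; reflexivity.
Defined.

Definition V (n : nat) : Functor (Contr_cat n) (Coll_cat n).
Proof.
  refine (@Build_Functor (Contr_cat n) (Coll_cat n) (@ccoll n)
            (fun A B f => ucm f) _ _); intros; reflexivity.
Defined.

From Stdlib Require Import FunctionalExtensionality ProofIrrelevance
  PropExtensionality ClassicalEpsilon Lia Program.Equality.

(* The left adjoint of V sends a collection K to its free contraction, whose
   cells are formal terms built from the cells of K by filling each parallel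
   pair of cells of a common arity alpha with a formal cell of arity id_alpha;
   parallel n-dimensional terms of equal arity are identified, which makes the
   result tame.  A map from K into the underlying collection of a contraction A
   extends uniquely by evaluating terms in A, and the identification is
   respected because A is tame.

   Every contraction cell gamma(a, b) of A is the counit applied to the formal
   filler of (a, b).  Hence a map of underlying collections that commutes with
   the counits preserves the contractions, and an Eilenberg-Moore algebra
   h : V F X -> X makes X a contraction, gamma(a, b) := h (formal filler of
   (a, b)), whose counit is h itself. *)

Lemma gam_congr {n} {L : coll n} (c : contraction L) m al al' h h' a a' b b'
  ha hb hab ha' hb' hab' :
  al = al' -> a = a' -> b = b' ->
  @gam _ _ c m al h a b ha hb hab = @gam _ _ c m al' h' a' b' ha' hb' hab'.
Proof. intros; subst; f_equal; apply proof_irrelevance. Qed.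

Lemma cmap_par {n} {L L' : coll n} (g : cmap L L') {m} {a b : cell (carrier L) m} :
  par (carrier L) m a b -> par (carrier L') m (cm g a) (cm g b).
Proof.
  destruct m; simpl; auto.
  intros [E1 E2]; rewrite <- !cm_src, <- !cm_tgt, E1, E2; auto.
Qed.

Lemma contr_map_gam {n} {A B : contr n} (g : contr_map A B) m al h a b ha hb hab :
  cm (ucm g) (@gam _ _ (ccon A) m al h a b ha hb hab) =
  @gam _ _ (ccon B) m al h (cm (ucm g) a) (cm (ucm g) b)
    (eq_trans (cm_ar _ a) ha) (eq_trans (cm_ar _ b) hb) (cmap_par _ hab).
Proof. apply ucm_gam. Qed.

Lemma cmap_ext n (K K' : coll n) (f g : cmap K K') :
  (forall m x, @cm _ _ _ f m x = cm g x) -> f = g.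
Proof.
  intros H; apply cmap_eq, functional_extensionality_dep; intros m.
  apply functional_extensionality; apply H.
Qed.

Lemma cmap_comp_eq_pointwise {n} {K1 K2 K2' K3 : coll n} {g : cmap K2 K3} {f : cmap K1 K2}
  {g' : cmap K2' K3} {f' : cmap K1 K2'} :
  cmap_comp g f = cmap_comp g' f' -> forall m x, cm g (@cm _ _ _ f m x) = cm g' (cm f' x).
Proof. intros E m x; exact (f_equal (fun k => @cm _ _ _ k m x) E). Qed.

Lemma cell_le {n} {K : coll n} {m} (x : cell (carrier K) m) : m <= n.
Proof.
  destruct (Compare_dec.le_gt_dec m n) as [|H]; [assumption|].
  destruct (trunc H x).
Qed.

Lemma pd_bd_id m (x : pd m) : pd_bd (pd_id x) = x.
Proof.
  induction m as [|m IH]; simpl; [now destruct x|].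
  induction x as [|y x IHx]; simpl; [reflexivity|]; now rewrite IH, IHx.
Qed.

Section Quotient.
Variables (T : Type) (R : T -> T -> Prop).
Hypothesis R_refl : forall x, R x x.
Hypothesis R_sym : forall x y, R x y -> R y x.
Hypothesis R_trans : forall x y z, R x y -> R y z -> R x z.

Definition quot := {P : T -> Prop | exists t, P = R t}.
Definition qclass (t : T) : quot := exist _ (R t) (ex_intro _ t eq_refl).
Definition qrepr (q : quot) : T :=
  proj1_sig (constructive_indefinite_description _ (proj2_sig q)).

Lemma qclass_qrepr q : qclass (qrepr q) = q.
Proof.
  unfold qrepr, qclass; destruct q as [P HP]; simpl.
  destruct (constructive_indefinite_description _ HP) as [t ->]; simpl.
  f_equal; apply proof_irrelevance.
Qed.

Lemma qclass_rel t u : qclass t = qclass u -> R t u.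
Proof.
  intros H; apply (f_equal (@proj1_sig _ _)) in H; simpl in H.
  rewrite H; apply R_refl.
Qed.

Lemma rel_qclass t u : R t u -> qclass t = qclass u.
Proof.
  intros H; unfold qclass.
  apply eq_sig_hprop; [intros; apply proof_irrelevance|]; simpl.
  apply functional_extensionality; intros x.
  apply propositional_extensionality; split; eauto.
Qed.

Lemma qrepr_qclass t : R (qrepr (qclass t)) t.
Proof. apply qclass_rel; rewrite qclass_qrepr; reflexivity. Qed.
End Quotient.
Arguments quot {T} R.
Arguments qclass {T R} t.
Arguments qrepr {T R} q.
Arguments qclass_qrepr {T R} q.
Arguments qclass_rel {T R} R_refl {t u} _.
Arguments rel_qclass {T R} R_sym R_trans {t u} _.
Arguments qrepr_qclass {T R} R_refl t.

Section FreeContraction.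
Variables (n : nat) (K : coll n).

Inductive term : nat -> Type :=
| Leaf : forall m, cell (carrier K) m -> term m
| Fill : forall m, term m -> term m -> term (S m).
Arguments Leaf {m} x.
Arguments Fill {m} a b.

Definition term_below (m : nat) : Type :=
  match m with 0 => unit | S j => term j end.

Definition term_src {m} (t : term (S m)) : term m :=
  match t in term k return term_below k with
  | @Leaf k x =>
      match k return cell (carrier K) k -> term_below k with
      | 0 => fun _ => tt | S j => fun x => Leaf (src _ x) end x
  | Fill a _ => a
  end.

Definition term_tgt {m} (t : term (S m)) : term m :=
  match t in term k return term_below k with
  | @Leaf k x =>
      match k return cell (carrier K) k -> term_below k with
      | 0 => fun _ => tt | S j => fun x => Leaf (tgt _ x) end x
  | Fill _ b => b
  end.

Fixpoint term_arity {m} (t : term m) : pd m :=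
  match t with
  | Leaf x => arity K x
  | Fill a _ => pd_id (term_arity a)
  end.

Definition term_par (m : nat) : term m -> term m -> Prop :=
  match m return term m -> term m -> Prop with
  | 0 => fun _ _ => True
  | S j => fun a b => term_src a = term_src b /\ term_tgt a = term_tgt b
  end.

(* A formal filler [Fill a b] is well formed when [(a, b)] lies in the
   domain [C_K(id_alpha)] of a contraction. *)
Fixpoint wf {m} (t : term m) : Prop :=
  match t with
  | Leaf _ => True
  | @Fill k a b =>
      wf a /\ wf b /\ term_arity a = term_arity b /\ term_par k a b /\ S k <= n
  end.

Lemma wf_le {m} {t : term m} : wf t -> m <= n.
Proof. destruct t as [k x|k a b]; simpl; [intros _; apply (cell_le x) | tauto]. Qed.

Lemma wf_bd {m} {t : term (S m)} : wf t -> wf (term_src t) /\ wf (term_tgt t).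
Proof. dependent destruction t; simpl; tauto. Qed.

Lemma term_arity_bd {m} {t : term (S m)} : wf t ->
  term_arity (term_src t) = pd_bd (term_arity t) /\
  term_arity (term_tgt t) = pd_bd (term_arity t).
Proof.
  dependent destruction t; simpl; intros W.
  - split; [apply arity_src | apply arity_tgt].
  - rewrite pd_bd_id; destruct W as (_ & _ & E & _); auto.
Qed.

Lemma term_glob {m} {t : term (S (S m))} : wf t ->
  term_src (term_src t) = term_src (term_tgt t) /\
  term_tgt (term_src t) = term_tgt (term_tgt t).
Proof.
  dependent destruction t; simpl; intros W.
  - rewrite glob_ss, glob_ts; auto.
  - apply W.
Qed.

Lemma term_par_sym m (t u : term m) : term_par m t u -> term_par m u t.
Proof. destruct m; simpl; intuition. Qed.

Lemma term_par_trans m (t u v : term m) :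
  term_par m t u -> term_par m u v -> term_par m t v.
Proof. destruct m; simpl; intuition congruence. Qed.

(* The identification forced by tameness: parallel terms of dimension [n]
   with the same arity. *)
Definition tame_rel {m} (t u : term m) : Prop :=
  t = u \/ (m = n /\ term_par m t u /\ term_arity t = term_arity u).

Lemma tame_rel_bd {m} {t u : term (S m)} :
  tame_rel t u -> term_src t = term_src u /\ term_tgt t = term_tgt u.
Proof. intros [->|(_ & P & _)]; auto. Qed.

Lemma tame_rel_arity {m} {t u : term m} : tame_rel t u -> term_arity t = term_arity u.
Proof. intros [->|(_ & _ & E)]; auto. Qed.

Lemma tame_rel_below {m} {t u : term m} : m < n -> tame_rel t u -> t = u.
Proof. intros H [E|(E & _)]; [exact E | lia]. Qed.

Definition wterm m := {t : term m | wf t}.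
Definition wtame_rel {m} (x y : wterm m) : Prop := tame_rel (proj1_sig x) (proj1_sig y).

Lemma wtame_rel_refl m (x : wterm m) : wtame_rel x x.
Proof. now left. Qed.

Lemma wtame_rel_sym m (x y : wterm m) : wtame_rel x y -> wtame_rel y x.
Proof.
  intros [E|(A & B & C)]; [left | right]; auto using term_par_sym.
Qed.

Lemma wtame_rel_trans m (x y z : wterm m) :
  wtame_rel x y -> wtame_rel y z -> wtame_rel x z.
Proof.
  unfold wtame_rel, tame_rel.
  intros [E|(A & B & C)] [E'|(A' & B' & C')]; try (rewrite ?E, <- ?E'; auto).
  right; split; auto; split; [eapply term_par_trans; eauto | congruence].
Qed.

Definition free_cell m := quot (@wtame_rel m).
Definition fclass {m} (t : term m) (w : wf t) : free_cell m := qclass (exist _ t w).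
Definition frepr {m} (q : free_cell m) : term m := proj1_sig (qrepr q).
Definition frepr_wf {m} (q : free_cell m) : wf (frepr q) := proj2_sig (qrepr q).

Lemma fclass_congr m (t u : term m) w w' : t = u -> fclass t w = fclass u w'.
Proof. intros ->; f_equal; apply proof_irrelevance. Qed.

Lemma fclass_frepr {m} (q : free_cell m) : fclass (frepr q) (frepr_wf q) = q.
Proof.
  unfold fclass, frepr, frepr_wf; rewrite <- sig_eta; apply qclass_qrepr.
Qed.

Lemma fclass_surj {m} (q : free_cell m) : exists t w, q = @fclass m t w.
Proof. exists (frepr q), (frepr_wf q); symmetry; apply fclass_frepr. Qed.

Lemma fclass_tame_rel {m t u w w'} : @fclass m t w = fclass u w' -> tame_rel t u.
Proof. exact (qclass_rel (@wtame_rel_refl m)). Qed.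

Lemma tame_rel_fclass m t u w w' : tame_rel t u -> @fclass m t w = fclass u w'.
Proof. intros H; apply (rel_qclass (@wtame_rel_sym m) (@wtame_rel_trans m)), H. Qed.

Lemma frepr_fclass {m t} w : tame_rel (frepr (@fclass m t w)) t.
Proof. exact (qrepr_qclass (@wtame_rel_refl m) (exist _ t w)). Qed.

Definition free_src {m} (q : free_cell (S m)) : free_cell m :=
  fclass (term_src (frepr q)) (proj1 (wf_bd (frepr_wf q))).
Definition free_tgt {m} (q : free_cell (S m)) : free_cell m :=
  fclass (term_tgt (frepr q)) (proj2 (wf_bd (frepr_wf q))).

Lemma free_src_fclass {m t} w w' : free_src (@fclass (S m) t w) = fclass (term_src t) w'.
Proof. apply fclass_congr, (tame_rel_bd (frepr_fclass w)). Qed.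

Lemma free_tgt_fclass {m t} w w' : free_tgt (@fclass (S m) t w) = fclass (term_tgt t) w'.
Proof. apply fclass_congr, (tame_rel_bd (frepr_fclass w)). Qed.

Lemma free_glob_ss m (q : free_cell (S (S m))) :
  free_src (free_src q) = free_src (free_tgt q).
Proof.
  destruct (fclass_surj q) as (t & w & ->).
  destruct (wf_bd w) as [ws wt].
  rewrite (free_src_fclass w ws), (free_tgt_fclass w wt).
  rewrite (free_src_fclass _ (proj1 (wf_bd ws))), (free_src_fclass _ (proj1 (wf_bd wt))).
  apply fclass_congr, (term_glob w).
Qed.

Lemma free_glob_ts m (q : free_cell (S (S m))) :
  free_tgt (free_src q) = free_tgt (free_tgt q).
Proof.
  destruct (fclass_surj q) as (t & w & ->).
  destruct (wf_bd w) as [ws wt].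
  rewrite (free_src_fclass w ws), (free_tgt_fclass w wt).
  rewrite (free_tgt_fclass _ (proj2 (wf_bd ws))), (free_tgt_fclass _ (proj2 (wf_bd wt))).
  apply fclass_congr, (term_glob w).
Qed.

Lemma free_trunc m : n < m -> free_cell m -> False.
Proof. intros H q; pose proof (wf_le (frepr_wf q)); lia. Qed.

Definition free_gset : gset n :=
  @GSet n free_cell (@free_src) (@free_tgt) free_glob_ss free_glob_ts free_trunc.

Definition free_arity {m} (q : free_cell m) : pd m := term_arity (frepr q).

Lemma free_arity_fclass {m t} w : free_arity (@fclass m t w) = term_arity t.
Proof. apply tame_rel_arity, frepr_fclass. Qed.

Lemma free_arity_src m (q : free_cell (S m)) :
  free_arity (free_src q) = pd_bd (free_arity q).
Proof.
  destruct (fclass_surj q) as (t & w & ->).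
  rewrite (free_src_fclass _ (proj1 (wf_bd w))), !free_arity_fclass.
  apply (term_arity_bd w).
Qed.

Lemma free_arity_tgt m (q : free_cell (S m)) :
  free_arity (free_tgt q) = pd_bd (free_arity q).
Proof.
  destruct (fclass_surj q) as (t & w & ->).
  rewrite (free_tgt_fclass _ (proj2 (wf_bd w))), !free_arity_fclass.
  apply (term_arity_bd w).
Qed.

Definition free_coll : coll n :=
  @Coll n free_gset (@free_arity) free_arity_src free_arity_tgt.

Lemma fclass_below m t u w w' : m < n -> @fclass m t w = fclass u w' -> t = u.
Proof. intros H E; exact (tame_rel_below H (fclass_tame_rel E)). Qed.

Lemma free_par_term_par m (a b : free_cell m) :
  par free_gset m a b -> term_par m (frepr a) (frepr b).
Proof.
  destruct m; simpl; [trivial|]; intros [E1 E2].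
  pose proof (wf_le (frepr_wf a)).
  split; eapply fclass_below; eauto; lia.
Qed.

Lemma term_par_free_par {m} {a b : term m} wa wb :
  term_par m a b -> par free_gset m (fclass a wa) (fclass b wb).
Proof.
  destruct m; simpl; auto; intros [P1 P2].
  rewrite (free_src_fclass wa (proj1 (wf_bd wa))), (free_src_fclass wb (proj1 (wf_bd wb))).
  rewrite (free_tgt_fclass wa (proj2 (wf_bd wa))), (free_tgt_fclass wb (proj2 (wf_bd wb))).
  split; apply fclass_congr; auto.
Qed.

Lemma free_fill_wf {m al} (h : S m <= n) {a b : free_cell m}
  (ha : free_arity a = al) (hb : free_arity b = al) (hab : par free_gset m a b) :
  wf (Fill (frepr a) (frepr b)).
Proof.
  unfold free_arity in *; simpl.
  repeat split; auto using frepr_wf, free_par_term_par; congruence.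
Qed.

Definition free_fill {m al} (h : S m <= n) {a b : free_cell m}
  (ha : free_arity a = al) (hb : free_arity b = al) (hab : par free_gset m a b)
  : free_cell (S m) :=
  fclass _ (free_fill_wf h ha hb hab).

Lemma free_fill_arity m al h a b ha hb hab :
  free_arity (@free_fill m al h a b ha hb hab) = pd_id al.
Proof. unfold free_fill; rewrite free_arity_fclass; simpl; now rewrite <- ha. Qed.

Lemma free_fill_src m al h a b ha hb hab : free_src (@free_fill m al h a b ha hb hab) = a.
Proof. unfold free_fill; rewrite (free_src_fclass (free_fill_wf h ha hb hab) (frepr_wf a)); apply fclass_frepr. Qed.

Lemma free_fill_tgt m al h a b ha hb hab : free_tgt (@free_fill m al h a b ha hb hab) = b.
Proof. unfold free_fill; rewrite (free_tgt_fclass (free_fill_wf h ha hb hab) (frepr_wf b)); apply fclass_frepr. Qed.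

Lemma free_tame (a b : free_cell n) :
  par free_gset n a b -> free_arity a = free_arity b -> a = b.
Proof.
  intros P E; rewrite <- (fclass_frepr a), <- (fclass_frepr b).
  apply tame_rel_fclass; right; auto using free_par_term_par.
Qed.

Definition free_contraction : contraction free_coll :=
  @Contraction n free_coll (@free_fill) free_fill_arity free_fill_src free_fill_tgt free_tame.

Definition free_contr : contr n := @Contr n free_coll free_contraction.

Definition free_unit_cell m (x : cell (carrier K) m) : free_cell m :=
  fclass (Leaf x) I.

Definition free_unit : cmap K free_coll.
Proof.
  refine (@CMap n K free_coll free_unit_cell _ _ _); intros; unfold free_unit_cell; simpl.
  - now rewrite (@free_src_fclass _ (Leaf x) I I).
  - now rewrite (@free_tgt_fclass _ (Leaf x) I I).
  - now rewrite free_arity_fclass.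
Defined.

Section Extension.
Variables (A : contr n) (f : cmap K (ccoll A)).
Local Notation C := (carrier (ccoll A)).

(* Evaluation of a term in [A]; a formal filler whose boundary evaluates
   outside the domain of the contraction has no value. *)
Fixpoint eval {m} (t : term m) : option (cell C m) :=
  match t with
  | Leaf x => Some (cm f x)
  | @Fill k a b =>
      match eval a, eval b with
      | Some x, Some y =>
          match excluded_middle_informative
                  (S k <= n /\ arity (ccoll A) y = arity (ccoll A) x /\ par C k x y) with
          | left H => Some (@gam _ _ (ccon A) k (arity _ x) (proj1 H) x y eq_refl
                              (proj1 (proj2 H)) (proj2 (proj2 H)))
          | right _ => None
          end
      | _, _ => None
      end
  end.

Lemma eval_arity {m} {t : term m} {x} : eval t = Some x -> arity (ccoll A) x = term_arity t.
Proof.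
  revert x; induction t as [k y|k a IHa b IHb]; simpl; intros x E.
  - injection E as <-; apply cm_ar.
  - destruct (eval a) as [xa|] eqn:Ea; [|discriminate].
    destruct (eval b) as [xb|] eqn:Eb; [|discriminate].
    destruct excluded_middle_informative; [|discriminate].
    injection E as <-; rewrite gam_ar, (IHa _ eq_refl); reflexivity.
Qed.

Lemma eval_bd {m} {t : term (S m)} {x} : eval t = Some x ->
  eval (term_src t) = Some (src C x) /\ eval (term_tgt t) = Some (tgt C x).
Proof.
  dependent destruction t; simpl; intros E.
  - injection E as <-; rewrite cm_src, cm_tgt; auto.
  - destruct (eval t1) as [x1|]; [|discriminate].
    destruct (eval t2) as [x2|]; [|discriminate].
    destruct excluded_middle_informative; [|discriminate].
    injection E as <-; rewrite gam_src, gam_tgt; auto.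
Qed.

Lemma eval_par {m} {a b : term m} {xa xb} : eval a = Some xa -> eval b = Some xb ->
  term_par m a b -> par C m xa xb.
Proof.
  destruct m; simpl; auto; intros Ea Eb [P1 P2].
  destruct (eval_bd Ea) as [Sa Ta], (eval_bd Eb) as [Sb Tb].
  rewrite P1 in Sa; rewrite P2 in Ta; split; congruence.
Qed.

Lemma eval_fill {m} {a b : term m} {xa xb al} h ha hb hab :
  eval a = Some xa -> eval b = Some xb ->
  eval (Fill a b) = Some (@gam _ _ (ccon A) m al h xa xb ha hb hab).
Proof.
  intros Ea Eb; simpl; rewrite Ea, Eb.
  destruct excluded_middle_informative as [H|H].
  - f_equal; apply gam_congr; auto.
  - exfalso; apply H; repeat split; auto; congruence.
Qed.

Lemma eval_wf {m} {t : term m} : wf t -> exists x, eval t = Some x.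
Proof.
  induction t as [k y|k a IHa b IHb]; simpl; [eauto|].
  intros (Wa & Wb & E & P & L).
  destruct (IHa Wa) as [xa Ea], (IHb Wb) as [xb Eb].
  assert (ha : arity (ccoll A) xa = term_arity a) by exact (eval_arity Ea).
  assert (hb : arity (ccoll A) xb = term_arity a) by (rewrite E; exact (eval_arity Eb)).
  eexists; exact (eval_fill L ha hb (eval_par Ea Eb P) Ea Eb).
Qed.

Definition extend_cell {m} (q : free_cell m) : cell C m :=
  proj1_sig (constructive_indefinite_description _ (eval_wf (frepr_wf q))).

Lemma eval_frepr {m} (q : free_cell m) : eval (frepr q) = Some (extend_cell q).
Proof. unfold extend_cell; destruct constructive_indefinite_description; auto. Qed.

(* Well defined on classes because [A] is tame. *)
Lemma extend_cell_fclass {m} {t : term m} w {x} :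
  eval t = Some x -> extend_cell (fclass t w) = x.
Proof.
  intros E; pose proof (eval_frepr (fclass t w)) as E'.
  destruct (frepr_fclass w) as [R|(-> & P & T)].
  - rewrite R in E'; congruence.
  - apply (tame (ccon A)); [eapply eval_par; eauto|].
    rewrite (eval_arity E'), (eval_arity E); exact T.
Qed.

Lemma eval_fclass {m} {t : term m} w : eval t = Some (extend_cell (fclass t w)).
Proof. destruct (eval_wf w) as [x E]; now rewrite (extend_cell_fclass w E). Qed.

Definition extend_cmap : cmap free_coll (ccoll A).
Proof.
  refine (@CMap n free_coll (ccoll A) (@extend_cell) _ _ _); simpl; intros m q.
  - destruct (fclass_surj q) as (t & w & ->).
    rewrite (free_src_fclass _ (proj1 (wf_bd w))).
    apply extend_cell_fclass, (eval_bd (eval_fclass w)).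
  - destruct (fclass_surj q) as (t & w & ->).
    rewrite (free_tgt_fclass _ (proj2 (wf_bd w))).
    apply extend_cell_fclass, (eval_bd (eval_fclass w)).
  - apply eval_arity, eval_frepr.
Defined.

Definition extend : contr_map free_contr A.
Proof.
  refine (@ContrMap n free_contr A extend_cmap _); simpl.
  intros m al h a b ha hb hab ha' hb' hab'.
  apply extend_cell_fclass, eval_fill; apply eval_frepr.
Defined.

Lemma extend_unit m (x : cell (carrier K) m) : cm (ucm extend) (cm free_unit x) = cm f x.
Proof. now apply extend_cell_fclass. Qed.
End Extension.

Lemma free_contr_map_unique (A : contr n) (g g' : contr_map free_contr A) :
  (forall m x, cm (ucm g) (cm free_unit x) = cm (ucm g') (@cm _ _ _ free_unit m x)) ->
  g = g'.
Proof.
  intros H; apply contr_map_eq, cmap_ext; intros m q.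
  destruct (fclass_surj q) as (t & w & ->).
  induction t as [k x|k a IHa b IHb].
  - change True in w; destruct w; apply H.
  - pose proof w as (wa & wb & E & P & L).
    assert (ha : free_arity (fclass a wa) = term_arity a) by apply free_arity_fclass.
    assert (hb : free_arity (fclass b wb) = term_arity a)
      by (rewrite free_arity_fclass; congruence).
    assert (Efill : fclass (Fill a b) w
                    = free_fill L ha hb (term_par_free_par wa wb P)).
    { apply fclass_congr; f_equal; symmetry;
        apply (tame_rel_below (t := frepr (fclass _ _)) L), frepr_fclass. }
    rewrite Efill; etransitivity; [apply (contr_map_gam g)|].
    etransitivity; [|symmetry; apply (contr_map_gam g')].
    apply gam_congr; auto.
Qed.
End FreeContraction.

Lemma extend_cell_unit n K A f m (x : cell (carrier K) m) :
  extend_cell n K A f (free_unit_cell n K m x) = cm f x.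
Proof. apply (extend_unit n K A f). Qed.

Ltac simpl_extend := repeat progress (simpl; rewrite ?extend_cell_unit); try reflexivity.

Definition free_functor (n : nat) : Functor (Coll_cat n) (Contr_cat n).
Proof.
  refine (@Build_Functor (Coll_cat n) (Contr_cat n) (free_contr n)
            (fun K K' h => extend n K (free_contr n K') (cmap_comp (free_unit n K') h)) _ _).
  - intros K; apply free_contr_map_unique; intros m x; simpl_extend.
  - intros K1 K2 K3 f g; apply free_contr_map_unique; intros m x; simpl_extend.
Defined.

Definition counit {n} (A : contr n) : contr_map (free_contr n (ccoll A)) A :=
  extend n (ccoll A) A (cmap_id _).

Lemma gam_counit n (A : contr n) m al h a b ha hb hab :
  @gam _ _ (ccon A) m al h a b ha hb hab =
  cm (ucm (counit A)) (free_fill n (ccoll A) h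
        (eq_trans (cm_ar (free_unit n _) a) ha) (eq_trans (cm_ar (free_unit n _) b) hb)
        (cmap_par (free_unit n _) hab)).
Proof.
  symmetry; etransitivity; [apply (contr_map_gam (counit A))|].
  apply gam_congr; auto; apply extend_unit.
Qed.

Definition contr_map_of {n} {A B : contr n} {f : cmap (ccoll A) (ccoll B)}
  (Hf : forall m al h a b ha hb hab,
      cm f (@gam _ _ (ccon A) m al h a b ha hb hab) =
      @gam _ _ (ccon B) m al h (cm f a) (cm f b)
        (eq_trans (cm_ar f a) ha) (eq_trans (cm_ar f b) hb) (cmap_par f hab)) :
  contr_map A B.
Proof.
  refine (@ContrMap n A B f _); intros.
  rewrite Hf; apply gam_congr; auto.
Defined.

Lemma comparison_full n (A B : contr n) (f : cmap (ccoll A) (ccoll B)) :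
  cmap_comp f (ucm (counit A)) =
  cmap_comp (ucm (counit B)) (ucm (fmap (free_functor n) f)) ->
  exists! g : contr_map A B, ucm g = f.
Proof.
  intros H.
  set (Ff := fmap (free_functor n) f).
  assert (Hf : forall m al h a b ha hb hab,
      cm f (@gam _ _ (ccon A) m al h a b ha hb hab) =
      @gam _ _ (ccon B) m al h (cm f a) (cm f b)
        (eq_trans (cm_ar f a) ha) (eq_trans (cm_ar f b) hb) (cmap_par f hab)).
  { intros; rewrite !gam_counit.
    rewrite (cmap_comp_eq_pointwise H).
    f_equal; etransitivity; [apply (contr_map_gam Ff)|].
    apply (gam_congr (free_contraction n (ccoll B))); auto;
      apply (extend_unit _ _ (free_contr n (ccoll B)) (cmap_comp (free_unit n _) f)). }
  exists (contr_map_of Hf); split; [reflexivity|].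
  intros g E; apply contr_map_eq; now rewrite E.
Qed.

Section AlgebraContraction.
Variables (n : nat) (X : coll n) (h : cmap (free_coll n X) X).
Hypothesis h_unit : forall m x, cm h (@cm _ _ _ (free_unit n X) m x) = x.

Definition alg_gam m al (hle : S m <= n) (a b : cell (carrier X) m)
  (ha : arity X a = al) (hb : arity X b = al) (hab : par (carrier X) m a b)
  : cell (carrier X) (S m) :=
  cm h (free_fill n X hle
          (eq_trans (cm_ar (free_unit n X) a) ha) (eq_trans (cm_ar (free_unit n X) b) hb)
          (cmap_par (free_unit n X) hab)).

Lemma alg_gam_arity m al hle a b ha hb hab :
  arity X (@alg_gam m al hle a b ha hb hab) = pd_id al.
Proof. unfold alg_gam; rewrite (cm_ar h); apply free_fill_arity. Qed.

Lemma alg_gam_src m al hle a b ha hb hab : src (carrier X) (@alg_gam m al hle a b ha hb hab) = a.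
Proof.
  unfold alg_gam; rewrite <- (cm_src h), <- (h_unit _ a).
  f_equal; apply free_fill_src.
Qed.

Lemma alg_gam_tgt m al hle a b ha hb hab : tgt (carrier X) (@alg_gam m al hle a b ha hb hab) = b.
Proof.
  unfold alg_gam; rewrite <- (cm_tgt h), <- (h_unit _ b).
  f_equal; apply free_fill_tgt.
Qed.

Lemma alg_tame (a b : cell (carrier X) n) :
  par (carrier X) n a b -> arity X a = arity X b -> a = b.
Proof.
  intros P E; rewrite <- (h_unit _ a), <- (h_unit _ b); f_equal.
  apply free_tame; [apply (cmap_par (free_unit n X) P)|].
  exact (eq_trans (cm_ar (free_unit n X) a) (eq_trans E (eq_sym (cm_ar (free_unit n X) b)))).
Qed.

Definition alg_contraction : contraction X :=
  @Contraction n X alg_gam alg_gam_arity alg_gam_src alg_gam_tgt alg_tame.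
End AlgebraContraction.
Arguments alg_contraction {n X h} h_unit.

Lemma comparison_ess_surj n (X : coll n) (h : cmap (free_coll n X) X) :
  cmap_comp h (free_unit n X) = cmap_id X ->
  cmap_comp h (ucm (fmap (free_functor n) h)) =
  cmap_comp h (ucm (counit (free_contr n X))) ->
  exists (A : contr n) (phi : cmap (ccoll A) X) (psi : cmap X (ccoll A)),
    cmap_comp phi psi = cmap_id X /\ cmap_comp psi phi = cmap_id (ccoll A) /\
    cmap_comp phi (ucm (counit A)) = cmap_comp h (ucm (fmap (free_functor n) phi)).
Proof.
  intros H1 H2.
  assert (h_unit : forall m x, cm h (@cm _ _ _ (free_unit n X) m x) = x)
    by (intros m x; exact (f_equal (fun k => @cm _ _ _ k m x) H1)).
  set (A := @Contr n X (alg_contraction h_unit)).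
  set (Fh := fmap (free_functor n) h).
  assert (Hh : forall m al hle a b ha hb hab,
      cm h (@gam _ _ (ccon (free_contr n X)) m al hle a b ha hb hab) =
      @gam _ _ (ccon A) m al hle (cm h a) (cm h b)
        (eq_trans (cm_ar h a) ha) (eq_trans (cm_ar h b) hb) (cmap_par h hab)).
  { intros; rewrite gam_counit, <- (cmap_comp_eq_pointwise H2).
    simpl; unfold alg_gam; f_equal.
    etransitivity; [apply (contr_map_gam Fh)|].
    apply (gam_congr (free_contraction n X)); auto;
      apply (extend_unit _ _ (free_contr n X) (cmap_comp (free_unit n X) h)). }
  exists A, (cmap_id X), (cmap_id X).
  split; [apply cmap_ext; reflexivity|]; split; [apply cmap_ext; reflexivity|].
  assert (E : counit A = contr_map_comp (@contr_map_of n (free_contr n X) A h Hh) (fmap (free_functor n) (cmap_id X))).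
  { apply free_contr_map_unique; intros m x; simpl_extend; symmetry; apply h_unit. }
  apply cmap_ext; intros m y; exact (f_equal (fun g => @cm _ _ _ (ucm g) m y) E).
Qed.

Theorem mainTheorem1 (n : nat) : monadic (V n).
Proof.
  exists (free_functor n), (free_unit n), (@counit n).
  repeat split.
  - intros X Y f; apply cmap_ext; intros m x; simpl_extend.
  - intros A B g; apply free_contr_map_unique; intros m x; simpl_extend.
  - intros X; apply free_contr_map_unique; intros m x; simpl_extend.
  - intros A; apply cmap_ext; intros m x; simpl_extend.
  - apply comparison_full.
  - apply comparison_ess_surj.
Qed.
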